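(* Let $n\ge 1$, $A\in\mathbb{R}^{n\times n}$ and $C\in\mathbb{R}^{1\times n}$. Assume that $(A,C)$ is an observable pair, that all eigenvalues of $A$ are nonzero, that all eigenvalues of $A$ are real, and that $(A^2,C)$ is an observable pair. Then for any $2n-1$ distinct nonnegative integers $t_1,\ldots,t_{2n-1}$, the matrix whose rows are $CA^{t_1},CA^{t_2},\ldots,CA^{t_{2n-1}}$ has rank $n$.
   Context: The setting is a linear time-invariant discrete-time single-output system $x(t+1)=Ax(t)+Bu(t)$, $y(t)=Cx(t)+Du(t)$, whose output is measured only at selected time instances $t_1,\ldots,t_l\in\{0,1,2,\ldots\}$. The system is called sample-based observable for these instances if the sample-based observability matrix, i.e. the $l\times n$ matrix with rows $CA^{t_1},\ldots,CA^{t_l}$, has rank $n$. A pair $(M,C)$ with $M\in\mathbb{R}^{n\times n}$ is observable if the matrix with rows $C,CM,\ldots,CM^{n-1}$ has rank $n$. *)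

From HB Require Import structures.
From mathcomp Require Import all_boot all_algebra.
From mathcomp Require Import reals complex.
Set Implicit Arguments. Unset Strict Implicit. Unset Printing Implicit Defensive.
Import GRing.Theory Num.Theory.
Local Open Scope ring_scope.

Definition sample_obs_mx (R : pzRingType) (n l : nat)
  (A : 'M[R]_n) (C : 'rV[R]_n) (t : 'I_l -> nat) : 'M[R]_(l, n) :=
  \matrix_(i < l, j < n) (C *m A ^+ (t i)) 0 j.

Definition obs_mx (R : pzRingType) (n : nat) (M : 'M[R]_n) (C : 'rV[R]_n)
  : 'M[R]_n :=
  \matrix_(i < n, j < n) (C *m M ^+ i) 0 j.

Definition observable (R : fieldType) (n : nat) (M : 'M[R]_n) (C : 'rV[R]_n)
  : bool := \rank (obs_mx M C) == n.

Definition complexify (R : rcfType) (n : nat) (A : 'M[R]_n) : 'M[R[i]]_n :=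
  map_mx (fun x : R => (x%:C)%C) A.

From HB Require Import structures.
From mathcomp Require Import all_boot all_order all_algebra.
From mathcomp Require Import reals complex zify.
Set Implicit Arguments.
Unset Strict Implicit.
Unset Printing Implicit Defensive.

Import Order.TTheory GRing.Theory Num.Theory.
Local Open Scope ring_scope.

(* If the samples kill a state y, then since at least n of the 2n-1 times share
   a parity b, writing them t = 2m + b, the sequence f(m) = C (A^2)^m A^b y
   vanishes at n distinct m.  The eigenvalues of A are real and nonzero, so
   those of A^2 are positive and f satisfies a linear recurrence of order n
   with positive characteristic roots mu_1, ..., mu_n.  A discrete Rolle
   argument shows that such a sequence cannot have n+1 weak sign alternations
   unless it vanishes: between two alternations of f, the difference
   f(m+1) - mu f(m) alternates in the opposite sense.  Hence f = 0, so
   A^b y = 0 by observability of (A^2, C), and y = 0 since A is invertible. *)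

Section Recurrences.
Variable R : comNzRingType.

Definition delta (mu : R) (f : nat -> R) (m : nat) : R := f m.+1 - mu * f m.

(* [lin_recurrent s f]: the shift operator polynomial [\prod_(mu <- s) (S - mu)]
   annihilates [f]. *)
Fixpoint lin_recurrent (s : seq R) (f : nat -> R) : Prop :=
  if s is mu :: s' then lin_recurrent s' (delta mu f) else forall m, f m = 0.

Lemma eq_lin_recurrent s f g : f =1 g -> lin_recurrent s f -> lin_recurrent s g.
Proof.
elim: s f g => [|mu s IHs] f g /= fg; first by move=> f0 m; rewrite -fg.
by apply: IHs => m; rewrite /delta !fg.
Qed.

Lemma lin_recurrent_horner_mx n (B : 'M[R]_n.+1) (C : 'rV_n.+1) (y : 'cV_n.+1) s :
  horner_mx B (\prod_(mu <- s) ('X - mu%:P)) *m y = 0 ->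
  lin_recurrent s (fun m => (C *m B ^+ m *m y) 0 0).
Proof.
elim: s y => [|mu s IHs] y /=.
  by rewrite big_nil rmorph1 mul1mx => -> m; rewrite mulmx0 mxE.
rewrite big_cons mulrC rmorphM rmorphB /= horner_mx_X horner_mx_C -mulmxA.
move=> /IHs; apply: eq_lin_recurrent => m.
rewrite /delta mulmxBl mul_scalar_mx !mulmxBr -!scalemxAr !mulmxA.
by rewrite -[_ *m B]mulmxA mulmxE -exprSr !mxE.
Qed.

End Recurrences.

Section DiscreteRolle.
Variable R : realDomainType.
Implicit Types (mu e : R) (f : nat -> R).

(* [alternates k e f m]: there are points [m = p_0 < p_1 < ... < p_k] with
   [0 <= (-1)^j * e * f p_j]; zeros count with either sign. *)
Fixpoint alternates k e f m : Prop :=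
  0 <= e * f m /\
  if k is k'.+1 then exists2 m', (m < m')%N & alternates k' (- e) f m' else True.

Lemma alternates_ge0 k e f m : alternates k e f m -> 0 <= e * f m.
Proof. by case: k => [|k] []. Qed.

Lemma delta_sign_change mu e f a b : 0 <= mu -> (a < b)%N ->
  0 <= e * f a -> 0 <= - e * f b ->
  exists2 p, (a <= p < b)%N & 0 <= - e * delta mu f p.
Proof.
move=> mu_ge0; elim: b => // b IHb; rewrite ltnS => le_ab fa fb.
have [fb_ge0 | fb_lt0] := lerP 0 (e * f b).
  exists b; first by rewrite le_ab /=.
  rewrite /delta mulrBr [- e * (mu * _)]mulNr opprK mulrCA.
  exact: addr_ge0 fb (mulr_ge0 mu_ge0 fb_ge0).
have lt_ab : (a < b)%N.
  by rewrite ltn_neqAle le_ab andbT; apply: contraTneq fb_lt0 => <-; rewrite -leNgt.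
have fb' : 0 <= - e * f b by rewrite mulNr oppr_ge0 ltW.
have [p /andP [le_ap lt_pb] dfp] := IHb lt_ab fa fb'.
by exists p; rewrite // le_ap ltnS ltnW.
Qed.

Lemma alternates_delta mu k e f m : 0 <= mu -> alternates k.+1 e f m ->
  exists2 p, (m <= p)%N & alternates k (- e) (delta mu f) p.
Proof.
move=> mu_ge0; elim: k e m => [|k IHk] e m [fm [m' lt_mm' alt_f]].
  have [p /andP [le_mp _] dfp] := delta_sign_change mu_ge0 lt_mm' fm alt_f.1.
  by exists p.
have [p /andP [le_mp lt_pm'] dfp] := delta_sign_change mu_ge0 lt_mm' fm alt_f.1.
have [p' le_m'p' alt_df] := IHk _ _ alt_f.
by exists p => //; split => //; exists p' => //; apply: leq_trans lt_pm' le_m'p'.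
Qed.

Lemma lin_recurrent_alternates_eq0 s f k e m :
  all (fun mu => 0 < mu) s -> lin_recurrent s f -> e != 0 -> (size s <= k)%N ->
  alternates k e f m -> forall j, f j = 0.
Proof.
elim: s f k e m => [|mu s IHs] f k e m /=; first by move=> _ f0 *; apply: f0.
move=> /andP [mu_gt0 s_gt0] rec_f e_neq0; case: k => // k; rewrite ltnS => le_sk alt_f.
have [p _ alt_df] := alternates_delta (ltW mu_gt0) alt_f.
have df0 j : delta mu f j = 0.
  by apply: (IHs _ _ _ _ s_gt0 rec_f _ le_sk alt_df); rewrite oppr_eq0.
have fE j : f j = mu ^+ j * f 0.
  elim: j => [|j IHj]; first by rewrite mul1r.
  have /eqP := df0 j; rewrite subr_eq0 => /eqP ->.
  by rewrite IHj exprS mulrA.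
have [fm [m' _ /alternates_ge0 fm']] := alt_f.
have : e * f 0 == 0.
  rewrite eq_le; apply/andP; split.
    by move: fm'; rewrite fE mulrCA pmulr_rge0 ?exprn_gt0 // mulNr oppr_ge0.
  by move: fm; rewrite fE mulrCA pmulr_rge0 ?exprn_gt0.
by rewrite mulf_eq0 (negbTE e_neq0) => /eqP f00 j; rewrite fE f00 mulr0.
Qed.

Lemma alternates_zeros f (z : seq nat) M e :
  sorted ltn z -> all (fun x => x < M)%N z -> {in z, forall x, f x = 0} ->
  0 <= e * (-1) ^+ size z * f M -> alternates (size z) e f (head M z).
Proof.
elim: z e => [|x z IHz] e /=; first by move=> _ _ _; rewrite expr0 mulr1.
move=> path_xz /andP [lt_xM lt_zM] z0 fM.
split; first by rewrite z0 ?mem_head ?mulr0.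
exists (head M z).
  by case: z {IHz lt_zM z0 fM} path_xz => [|y z] //= /andP [].
apply: IHz.
- exact: path_sorted path_xz.
- exact: lt_zM.
- by move=> y zy; apply: z0; rewrite inE zy orbT.
by rewrite mulNr; move: fM; rewrite exprS mulN1r mulrN.
Qed.

Lemma lin_recurrent_zeros_eq0 s f (z : seq nat) :
  all (fun mu => 0 < mu) s -> lin_recurrent s f ->
  uniq z -> {in z, forall x, f x = 0} -> (size s <= size z)%N -> forall j, f j = 0.
Proof.
move=> s_gt0 rec_f uniq_z z0 le_sz.
pose M := (\max_(x <- z) x).+1.
have [c c_neq0 cfM] : exists2 c : R, c != 0 & 0 <= c * f M.
  have [fM_ge0 | fM_lt0] := lerP 0 (f M); first by exists 1; rewrite ?oner_eq0 ?mul1r.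
  by exists (-1); rewrite ?oppr_eq0 ?oner_eq0 // mulN1r oppr_ge0 ltW.
(* The sorted zeros followed by [M] give [size z] weak alternations. *)
pose zs := sort leq z.
pose e := c * (-1) ^+ size zs.
apply: (@lin_recurrent_alternates_eq0 s f (size zs) e (head M zs)) => //.
- by rewrite mulf_neq0 ?signr_eq0.
- by rewrite size_sort.
apply: alternates_zeros.
- by rewrite ltn_sorted_uniq_leq sort_uniq uniq_z sort_sorted //; apply: leq_total.
- by apply/allP => x; rewrite mem_sort ltnS => zx; apply: leq_bigmax_seq.
- by move=> x; rewrite mem_sort; apply: z0.
by rewrite /e -!mulrA (mulrA (_ ^+ _)) -exprMn mulrNN mulr1 expr1n mul1r.
Qed.

End DiscreteRolle.

Lemma expr_odd_half (R : pzSemiRingType) (x : R) k :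
  x ^+ k = (x ^+ 2) ^+ k./2 * x ^+ odd k.
Proof. by rewrite -exprM -exprD addnC mulnC muln2 odd_double_half. Qed.

Lemma parity_class_large n (s : seq nat) : (2 * n - 1 <= size s)%N ->
  exists b : bool, (n <= size [seq x <- s | odd x == b])%N.
Proof.
have : (count (fun x => odd x == true) s + count (fun x => odd x == false) s)%N
    = size s.
  rewrite -(count_predC (fun x => odd x == true)); congr addn.
  by apply: eq_count => x /=; case: odd.
rewrite -!size_filter => size_s le_s.
have [le_n | lt_n] := leqP n (size [seq x <- s | odd x == true]).
  by exists true.
by exists false; lia.
Qed.

Lemma uniq_half_parity_class (s : seq nat) (b : bool) :
  uniq s -> uniq [seq x./2 | x <- s & odd x == b].
Proof.
move=> uniq_s; rewrite map_inj_in_uniq ?filter_uniq // => x y.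
rewrite !mem_filter => /andP [/eqP odd_x _] /andP [/eqP odd_y _] eq_half.
by rewrite -[x]odd_double_half -[y]odd_double_half odd_x odd_y eq_half.
Qed.

Lemma horner_mx_prod_XsubC_sqr (R : comNzRingType) n (A : 'M[R]_n.+1) (r : seq R) :
  horner_mx A (\prod_(x <- r) ('X - x%:P)) = 0 ->
  horner_mx (A ^+ 2) (\prod_(x <- r) ('X - (x ^+ 2)%:P)) = 0.
Proof.
move=> pA0; rewrite rmorph_prod.
have -> : \prod_(x <- r) horner_mx (A ^+ 2) ('X - (x ^+ 2)%:P) =
    horner_mx A (\prod_(x <- r) (('X - x%:P) * ('X + x%:P))).
  rewrite rmorph_prod; apply: eq_bigr => x _.
  by rewrite -subr_sqr !rmorphB /= !rmorphXn /= !horner_mx_X !horner_mx_C.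
by rewrite big_split rmorphM /= pA0 mul0r.
Qed.

Lemma sample_obs_mx_mulmxE (R : pzRingType) n l (A : 'M[R]_n) (C : 'rV_n)
    (t : 'I_l -> nat) (y : 'cV_n) i :
  (sample_obs_mx A C t *m y) i 0 = (C *m A ^+ t i *m y) 0 0.
Proof. by rewrite !mxE; apply: eq_bigr => j _; rewrite !mxE. Qed.

Section Observability.
Variable F : fieldType.

Lemma mxrank_full_colP l n (M : 'M[F]_(l, n)) :
  \rank M = n <-> (forall y : 'cV_n, M *m y = 0 -> y = 0).
Proof.
rewrite -mxrank_tr; split => [rkM y My0 | kerM].
  apply: trmx_inj; rewrite trmx0; apply: (row_free_inj (A := M^T)); first exact/eqP.
  by rewrite mul0mx -trmx_mul My0 trmx0.
apply/eqP/inj_row_free => v vM0; apply: trmx_inj; rewrite trmx0; apply: kerM.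
by rewrite -[M]trmxK -trmx_mul vM0 trmx0.
Qed.

Lemma observable_eq0 n (B : 'M[F]_n) (C : 'rV_n) (y : 'cV_n) :
  observable B C -> (forall m, (C *m B ^+ m *m y) 0 0 = 0) -> y = 0.
Proof.
move=> obsB y0; have rkB : \rank (sample_obs_mx B C val) = n := eqP obsB.
apply: (proj1 (mxrank_full_colP _) rkB); apply/matrixP => i j.
by rewrite [j]ord1 sample_obs_mx_mulmxE y0 mxE.
Qed.

Lemma unitmx_eigenvalue0 n (A : 'M[F]_n) : ~~ eigenvalue A 0 -> A \in unitmx.
Proof.
move=> eig0; rewrite -row_free_unit; apply/inj_row_free => v vA0.
apply/eqP; apply: contraNT eig0 => v_neq0; apply/eigenvalueP.
by exists v; rewrite // vA0 scale0r.
Qed.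

End Observability.

Lemma observable_zeros_eq0 (R : realFieldType) n (B : 'M[R]_n.+1) (C : 'rV_n.+1)
    (s : seq R) (y : 'cV_n.+1) (z : seq nat) :
  observable B C -> all (fun mu => 0 < mu) s ->
  horner_mx B (\prod_(mu <- s) ('X - mu%:P)) = 0 ->
  uniq z -> (size s <= size z)%N -> {in z, forall m, (C *m B ^+ m *m y) 0 0 = 0} ->
  y = 0.
Proof.
move=> obsB s_gt0 pB0 uniq_z le_sz z0; apply: observable_eq0 obsB _.
apply: lin_recurrent_zeros_eq0 s_gt0 _ uniq_z z0 le_sz.
by apply: lin_recurrent_horner_mx; rewrite pB0 mul0mx.
Qed.

Section RealSpectrum.
Variables (R : rcfType) (n : nat) (A : 'M[R]_n).

Lemma eigenvalue_complexify (x : R) :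
  eigenvalue (complexify A) (x%:C)%C = eigenvalue A x.
Proof. exact: (eigenvalue_map (real_complex R)). Qed.

Lemma char_poly_real_split :
  (forall z : R[i], eigenvalue (complexify A) z -> complex.Im z = 0) ->
  exists r : seq R, char_poly A = \prod_(x <- r) ('X - x%:P).
Proof.
move=> eig_real.
have [s cpE] := closed_field_poly_normal (char_poly (complexify A)).
rewrite (monicP (char_poly_monic _)) scale1r in cpE.
have s_real z : z \in s -> z = ((complex.Re z)%:C)%C.
  move=> zs; rewrite {1}[z]complexE eig_real ?mulr0 ?addr0 //.
  by rewrite eigenvalue_root_char cpE root_prod_XsubC.
exists (map (@complex.Re R) s); apply: (@map_poly_inj _ _ (real_complex R)).
rewrite map_char_poly -[map_mx _ A]/(complexify A) cpE rmorph_prod big_map.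
by apply: eq_big_seq => z zs; rewrite rmorphB /= map_polyX map_polyC /= -s_real.
Qed.

End RealSpectrum.

Theorem theorem1 (R : realType) (n : nat) (A : 'M[R]_n) (C : 'rV[R]_n) :
  (0 < n)%N ->
  observable A C ->
  (forall z : R[i], eigenvalue (complexify A) z -> z != 0) ->
  (forall z : R[i], eigenvalue (complexify A) z -> complex.Im z = 0) ->
  observable (A ^+ 2) C ->
  forall t : 'I_(2 * n - 1) -> nat, injective t ->
  \rank (sample_obs_mx A C t) = n.
Proof.
case: n A C => [//|n] A C _ _ eig_neq0 eig_real obsA2 t t_inj.
have [r cpA] := char_poly_real_split eig_real.
have eigA_neq0 x : eigenvalue A x -> x != 0.
  by rewrite -eigenvalue_complexify => /eig_neq0; apply: contraNneq => ->; rewrite rmorph0.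
have A_unit : A \in unitmx.
  by apply: unitmx_eigenvalue0; apply/negP => /eigA_neq0; rewrite eqxx.
apply/mxrank_full_colP => y samples0.
pose s := [seq t i | i <- enum 'I_(2 * n.+1 - 1)].
have /parity_class_large [b large_b] : (2 * n.+1 - 1 <= size s)%N.
  by rewrite size_map size_enum_ord.
have Ab_unit : A ^+ b \in unitmx by case: (b); rewrite ?expr0 ?unitmx1.
suff Aby0 : A ^+ b *m y = 0 by rewrite -(mulKmx Ab_unit y) Aby0 mulmx0.
apply: (@observable_zeros_eq0 _ _ _ _ [seq x ^+ 2 | x <- r] _
  [seq x./2 | x <- s & odd x == b] obsA2).
- apply/allP => _ /mapP [x rx ->]; rewrite exprn_even_gt0 //= eigA_neq0 //.
  by rewrite eigenvalue_root_char cpA root_prod_XsubC.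
- by rewrite big_map; apply: horner_mx_prod_XsubC_sqr; rewrite -cpA Cayley_Hamilton.
- by apply: uniq_half_parity_class; rewrite map_inj_uniq ?enum_uniq.
- by have := size_char_poly A; rewrite cpA size_prod_XsubC !size_map => -[->].
move=> m /mapP [x]; rewrite mem_filter => /andP [/eqP odd_x /mapP [i _ x_ti]] ->.
rewrite x_ti in odd_x *.
by rewrite mulmxA -(mulmxA C) mulmxE -odd_x -expr_odd_half -sample_obs_mx_mulmxE
  samples0 mxE.
Qed.
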